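(* Let $X=(X_1,\dots,X_k)$ be a $k$-good random valuation and let $0<\lambda_1,\dots,\lambda_k\le1$. Let $\mathcal{M}_{\lambda_1,\dots,\lambda_k}$ be the set of all IC and IR mechanisms $\mu=(q,s)$ with $q_i(x)\in[0,\lambda_i]$ for every $x\in\mathbb{R}_+^k$ and $i=1,\dots,k$. Then \[ \textsc{Rev}(X_1,\dots,X_k)=\sup_{\mu\in\mathcal{M}_{\lambda_1,\dots,\lambda_k}}R(\mu;\tilde X_1,\dots,\tilde X_k),\qquad\text{where }\tilde X_i:=X_i/\lambda_i . \]
   Context: A $k$-good random valuation is a random vector in $\mathbb{R}_+^k$. A mechanism is a pair $\mu=(q,s)$ of Borel functions $q=(q_1,\dots,q_k):\mathbb{R}_+^k\to[0,1]^k$, $s:\mathbb{R}_+^k\to\mathbb{R}$ (for members of $\mathcal{M}_{\lambda_1,\dots,\lambda_k}$, $q$ takes values in $\prod_i[0,\lambda_i]$), with buyer payoff $b(x)=q(x)\cdot x-s(x)$; IR means $b(x)\ge0$ for all $x$; IC means $b(x)\ge q(\tilde x)\cdot x-s(\tilde x)$ for all $x,\tilde x$. $R(\mu;X)=\mathbb{E}[s(X)]$ and $\textsc{Rev}(X)$ is the supremum of $R(\mu;X)$ over all IC and IR mechanisms (with $q$ valued in $[0,1]^k$). *)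

From HB Require Import structures.
From mathcomp Require Import all_boot all_order all_algebra.
From mathcomp Require Import all_classical all_reals all_analysis.
Set Implicit Arguments. Unset Strict Implicit. Unset Printing Implicit Defensive.
Import Order.TTheory GRing.Theory Num.Theory.
Import numFieldNormedType.Exports.
Local Open Scope classical_set_scope.
Local Open Scope ring_scope.

(* Points of R^k are row vectors 'rV[R]_k; coordinate i of x is x 0 i. *)

Definition borelV (R : realType) (k : nat) : set (set 'rV[R]_k) :=
  <<s [set U : set 'rV[R]_k | open U] >>.

Definition borel_fun (R : realType) (k : nat) (f : 'rV[R]_k -> R) : Prop :=
  forall B : set R, measurable B -> @borelV R k (f @^-1` B).

Definition nonnegV (R : realType) (k : nat) (x : 'rV[R]_k) : Prop :=
  forall i : 'I_k, 0 <= x 0 i.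

Definition good_valuation (R : realType) (d : measure_display)
    (T : measurableType d) (k : nat) (X : T -> 'rV[R]_k) : Prop :=
  (forall A, @borelV R k A -> measurable (X @^-1` A)) /\
  (forall w, nonnegV (X w)).

(* buyer payoff b(x) = q(x).x - s(x) when reporting xt while true value x *)
Definition payoff (R : realType) (k : nat) (q : 'rV[R]_k -> 'rV[R]_k)
    (s : 'rV[R]_k -> R) (x xt : 'rV[R]_k) : R :=
  \sum_(i < k) q xt 0 i * x 0 i - s xt.

Definition IR (R : realType) (k : nat) (q : 'rV[R]_k -> 'rV[R]_k)
    (s : 'rV[R]_k -> R) : Prop :=
  forall x, nonnegV x -> 0 <= payoff q s x x.

Definition IC (R : realType) (k : nat) (q : 'rV[R]_k -> 'rV[R]_k)
    (s : 'rV[R]_k -> R) : Prop :=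
  forall x xt, nonnegV x -> nonnegV xt -> payoff q s x xt <= payoff q s x x.

Definition mech_in (R : realType) (k : nat) (lam : 'I_k -> R)
    (q : 'rV[R]_k -> 'rV[R]_k) (s : 'rV[R]_k -> R) : Prop :=
  (forall i : 'I_k, borel_fun (fun x => q x 0 i)) /\ borel_fun s /\
  (forall x, nonnegV x -> forall i, 0 <= q x 0 i <= lam i) /\
  IC q s /\ IR q s.

Definition revenue (R : realType) (d : measure_display) (T : measurableType d)
    (P : probability T R) (k : nat) (s : 'rV[R]_k -> R) (X : T -> 'rV[R]_k)
    : \bar R :=
  (\int[P]_w (s (X w))%:E)%E.

Definition sup_rev (R : realType) (d : measure_display) (T : measurableType d)
    (P : probability T R) (k : nat) (lam : 'I_k -> R) (X : T -> 'rV[R]_k)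
    : \bar R :=
  ereal_sup [set r | exists q s, mech_in lam q s /\ r = revenue P s X].

Definition Rev (R : realType) (d : measure_display) (T : measurableType d)
    (P : probability T R) (k : nat) (X : T -> 'rV[R]_k) : \bar R :=
  sup_rev P (fun _ => 1) X.

From HB Require Import structures.
From mathcomp Require Import all_boot all_order all_algebra.
From mathcomp Require Import all_classical all_reals all_analysis.
Set Implicit Arguments. Unset Strict Implicit. Unset Printing Implicit Defensive.
Import Order.TTheory GRing.Theory Num.Theory.
Import numFieldNormedType.Exports.
Local Open Scope classical_set_scope.
Local Open Scope ring_scope.

(* Write (lam x)_i = lam_i x_i.  If (q, s) is IC and IR with q in [0,1]^k,
   then y |-> (lam q(lam y), s(lam y)) is IC and IR with q_i in [0, lam_i]:
   its payoffs at (y, yt) are those of (q, s) at (lam y, lam yt), since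
   (lam q) . y = q . (lam y).  On X / lam it earns what (q, s) earns on X.
   Rescaling by 1/lam maps M_lam back into M_1 in the same way, so the two
   sets of revenues coincide. *)

Section Borel.
Variable R : realType.

Lemma borelV_preimage m n (g : 'rV[R]_m -> 'rV[R]_n) (A : set 'rV[R]_n) :
  continuous g -> borelV A -> borelV (g @^-1` A).
Proof.
move=> g_cont; rewrite -[g @^-1` A]setTI; move: A; apply: smallest_sub.
  exact/sigma_algebra_image/smallest_sigma_algebra.
by move=> U U_open; apply: sub_sigma_algebra; rewrite /= setTI; exact: open_comp.
Qed.

Lemma borel_fun_comp m n (f : 'rV[R]_n -> R) (g : 'rV[R]_m -> 'rV[R]_n) :
  borel_fun f -> continuous g -> borel_fun (f \o g).
Proof. by move=> f_borel g_cont B mB; exact: borelV_preimage g_cont (f_borel B mB). Qed.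

Lemma borel_funMr n (f : 'rV[R]_n -> R) (a : R) :
  borel_fun f -> borel_fun (fun x => f x * a).
Proof.
move=> f_borel B mB; apply: (f_borel (( *%R^~ a) @^-1` B)).
by rewrite -[_ @^-1` B]setTI; exact: measurable_realfun.mulrr_measurable.
Qed.

End Borel.

Section Rescale.
Variables (R : realType) (k : nat).

Definition rescale (c : 'I_k -> R) (x : 'rV[R]_k) : 'rV[R]_k :=
  \row_i (x 0 i * c i).

Lemma rescale_continuous c : continuous (rescale c).
Proof.
move=> x A [P xP PA].
exists (fun i j => ( *%R^~ (c j)) @^-1` P i j) => [i j|y Py].
  by rewrite [i]ord1; apply: (@mulrr_continuous R (c j)); have := xP 0 j; rewrite mxE.
by apply: PA => i j; rewrite mxE [i]ord1; exact: Py.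
Qed.

Lemma rescaleK c x : (forall i, c i != 0) ->
  rescale c (rescale (fun i => (c i)^-1) x) = x.
Proof. by move=> c_neq0; apply/rowP => i; rewrite !mxE mulfVK. Qed.

Lemma nonnegV_rescale c x :
  (forall i, 0 <= c i) -> nonnegV x -> nonnegV (rescale c x).
Proof. by move=> c_ge0 x_ge0 i; rewrite mxE mulr_ge0. Qed.

Lemma payoff_rescale c q s x xt :
  payoff (rescale c \o q \o rescale c) (s \o rescale c) x xt =
  payoff q s (rescale c x) (rescale c xt).
Proof.
by rewrite /payoff; congr (_ - _); apply: eq_bigr => i _; rewrite !mxE mulrAC mulrA.
Qed.

Lemma mech_in_rescale (L L' c : 'I_k -> R) q s :
  (forall i, 0 <= c i) -> (forall i, L' i = L i * c i) -> mech_in L q s ->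
  mech_in L' (rescale c \o q \o rescale c) (s \o rescale c).
Proof.
move=> c_ge0 L'E [q_borel [s_borel [q_range [q_IC q_IR]]]].
have c_nonneg x := @nonnegV_rescale c x c_ge0.
split; [|split; [|split; [|split]]].
- move=> i; have -> : (fun x => (rescale c \o q \o rescale c) x 0 i) =
                       (fun y => q y 0 i * c i) \o rescale c.
    by apply/funext => x; rewrite /= mxE.
  exact: borel_fun_comp (borel_funMr (c i) (q_borel i)) (@rescale_continuous c).
- exact: borel_fun_comp s_borel (@rescale_continuous c).
- move=> x x_ge0 i; rewrite /= mxE L'E.
  have /andP[q_ge0 q_le] := q_range _ (c_nonneg _ x_ge0) i.
  by rewrite mulr_ge0 //= ler_wpM2r.
- by move=> x xt x_ge0 xt_ge0; rewrite !payoff_rescale; apply: q_IC; exact: c_nonneg.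
- by move=> x x_ge0; rewrite payoff_rescale; apply: q_IR; exact: c_nonneg.
Qed.

End Rescale.

Theorem lemma1 (R : realType) (d : measure_display) (T : measurableType d)
    (P : probability T R) (k : nat) (X : T -> 'rV[R]_k) (lam : 'I_k -> R) :
  good_valuation X ->
  (forall i, 0 < lam i <= 1) ->
  Rev P X = sup_rev P lam (fun w => \row_(i < k) (X w 0 i / lam i)).
Proof.
move=> _ lam_range.
have lam_gt0 i : 0 < lam i by case/andP: (lam_range i).
pose lamV i := (lam i)^-1.
have lamV_gt0 i : 0 < lamV i by rewrite invr_gt0.
rewrite /Rev /sup_rev; congr ereal_sup; apply/seteqP; split => _ [q [s [mech ->]]].
- exists (rescale lam \o q \o rescale lam), (s \o rescale lam); split.
    by apply: mech_in_rescale mech => i; [exact: ltW (lam_gt0 i) | rewrite mul1r].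
  rewrite /revenue; congr integral; apply/funext => w /=.
  by rewrite (rescaleK (X w)) // => i; rewrite gt_eqF.
- exists (rescale lamV \o q \o rescale lamV), (s \o rescale lamV); split => //.
  by apply: mech_in_rescale mech => i; [exact: ltW (lamV_gt0 i) | rewrite divff ?gt_eqF].
Qed.
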